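(* Let $S$ be an additively reduced semidomain and $G$ a torsion-free abelian group. Let $f=\sum_{i=0}^\infty s_ix^{g_i}\in S[\![G]\!]$ with $s_i\neq0$ for all $i\in\mathbb{N}_0$. If for some $N\in\mathbb{N}_0$ the sequence $(g_{N+i+1}-g_{N+i})_{i\in\mathbb{N}_0}$ is strictly increasing and unbounded above in $G$, then $f$ is monolithic.
   Context: A semidomain is a subsemiring (containing $0$ and $1$) of an integral domain. $S$ is additively reduced if $0$ is the only invertible element of $(S,+)$. $G$ carries a fixed total order compatible with addition. $S[\![G]\!]=\{\sum_{i=0}^\infty s_ix^{g_i} : s_i\in S,\ g_i\in G,\ g_i<g_{i+1}\}$ with operations defined as for polynomials. A nonzero $f$ is monolithic if $f=pq$ with $p,q\in S[\![G]\!]$ implies one of $p,q$ is a monomial $sx^g$. *)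

From mathcomp Require Import all_boot all_order all_algebra.
Set Implicit Arguments. Unset Strict Implicit. Unset Printing Implicit Defensive.
Import GRing.Theory.
Local Open Scope ring_scope.

Definition semidomain_pred (R : idomainType) (S : pred R) : Prop :=
  [/\ 0 \in S, 1 \in S,
      (forall x y, x \in S -> y \in S -> x + y \in S) &
      (forall x y, x \in S -> y \in S -> x * y \in S)].

Definition additively_reduced (R : idomainType) (S : pred R) : Prop :=
  forall x y, x \in S -> y \in S -> x + y = 0 -> x = 0.

Definition torsion_free (G : zmodType) : Prop :=
  forall (x : G) (n : nat), (0 < n)%N -> x *+ n = 0 -> x = 0.

Definition ordered_group (G : zmodType) (lt : rel G) : Prop :=
  [/\ (forall x, ~~ lt x x),
      (forall x y z, lt x y -> lt y z -> lt x z),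
      (forall x y, x != y -> lt x y || lt y x) &
      (forall x y z, lt x y -> lt (x + z) (y + z))].

(* An element sum_i s_i x^{g_i} of S[[G]] is given by a pair of sequences
   (s, g) with s_i in S and g strictly increasing. *)
Definition is_series (R : idomainType) (S : pred R) (G : zmodType) (lt : rel G)
    (s : nat -> R) (g : nat -> G) : Prop :=
  (forall i, s i \in S) /\ (forall i, lt (g i) (g i.+1)).

Definition coef_rel (R : idomainType) (G : zmodType)
    (s : nat -> R) (g : nat -> G) (h : G) (c : R) : Prop :=
  (exists i, g i = h /\ s i = c) \/ ((forall i, g i <> h) /\ c = 0).

(* c is the coefficient of x^h in the product (sum_i p_i x^{a_i})(sum_j q_j x^{b_j}),
   i.e. the (finite) sum of p_i q_j over the pairs (i,j) with a_i + b_j = h. *)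
Definition prod_coef_rel (R : idomainType) (G : zmodType)
    (p : nat -> R) (a : nat -> G) (q : nat -> R) (b : nat -> G) (h : G) (c : R) : Prop :=
  exists l : seq (nat * nat),
    [/\ uniq l,
        (forall i j, (i, j) \in l <-> a i + b j = h) &
        c = \sum_(ij <- l) p ij.1 * q ij.2].

Definition series_mul_eq (R : idomainType) (G : zmodType)
    (s : nat -> R) (g : nat -> G)
    (p : nat -> R) (a : nat -> G) (q : nat -> R) (b : nat -> G) : Prop :=
  forall h, exists c, coef_rel s g h c /\ prod_coef_rel p a q b h c.

Definition is_monomial (R : idomainType) (S : pred R) (G : zmodType)
    (p : nat -> R) (a : nat -> G) : Prop :=
  exists (s0 : R) (g0 : G), s0 \in S /\
    forall h, coef_rel p a h (if h == g0 then s0 else 0).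

Definition monolithic (R : idomainType) (S : pred R) (G : zmodType) (lt : rel G)
    (s : nat -> R) (g : nat -> G) : Prop :=
  (exists i, s i != 0) /\
  forall p a q b, is_series S lt p a -> is_series S lt q b ->
    series_mul_eq s g p a q b -> is_monomial S p a \/ is_monomial S q b.

From mathcomp Require Import all_boot all_order all_algebra.
From mathcomp Require Import zify.
From Stdlib Require Import Classical.
Set Implicit Arguments. Unset Strict Implicit.
Import GRing.Theory.
Local Open Scope ring_scope.

(* If f = pq with neither factor a monomial, no coefficient of the product
   cancels because S is additively reduced, so the exponents of f are exactly
   the sums of an exponent of p and an exponent of q.  Let x < y be two
   exponents of p: every exponent b of q gives two exponents x + b < y + b of f
   at distance y - x.  Since the gaps of f eventually exceed y - x, q has only
   finitely many exponents, and symmetrically so has p.  Then the exponents of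
   f are bounded above, whereas diverging gaps make them unbounded. *)

Section OrderedGroup.
Variables (G : zmodType) (lt : rel G).
Hypothesis og : ordered_group lt.

Lemma lt_irr x : ~~ lt x x.
Proof. by case: og. Qed.

Lemma lt_trans y x z : lt x y -> lt y z -> lt x z.
Proof. by case: og => _ + _ _; apply. Qed.

Lemma lt_asym x y : lt x y -> ~~ lt y x.
Proof. by move=> xy; apply/negP => /(lt_trans xy); rewrite (negbTE (lt_irr x)). Qed.

Lemma lt_add2r z x y : lt x y -> lt (x + z) (y + z).
Proof. by case: og => _ _ _; apply. Qed.

Lemma lt_add2l z x y : lt x y -> lt (z + x) (z + y).
Proof. by rewrite ![z + _]addrC; apply: lt_add2r. Qed.

Definition increasing (f : nat -> G) := forall i, lt (f i) (f i.+1).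

Definition gap (f : nat -> G) k := f k.+1 - f k.

Definition diverging_gaps (f : nat -> G) :=
  forall d, exists K, forall k, (K <= k)%N -> lt d (gap f k).

Lemma increasing_mono f : increasing f -> {mono f : m n / (m < n)%N >-> lt m n}.
Proof.
move=> hf; have homo_f m n : (m < n)%N -> lt (f m) (f n).
  elim: n => // n IHn; rewrite ltnS leq_eqVlt => /orP[/eqP-> //|/IHn].
  by move/lt_trans; apply; apply: hf.
move=> m n; case: (ltngtP m n) => [/homo_f -> // | /homo_f /lt_asym/negbTE -> //|->].
exact/negbTE/lt_irr.
Qed.

Lemma increasing_inj f : increasing f -> injective f.
Proof.
move=> hf m n fmn; case: (ltngtP m n) => // mn.
  by have := lt_irr (f n); rewrite -{1}fmn (increasing_mono hf) mn.
by have := lt_irr (f m); rewrite {1}fmn (increasing_mono hf) mn.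
Qed.

Lemma eventually_lt_increasing c : increasing c -> (forall u, exists i, lt u (c i)) ->
  forall u, exists K, forall k, (K <= k)%N -> lt u (c k).
Proof.
move=> hc unb u; have [K hK] := unb u; exists K => k.
rewrite leq_eqVlt => /orP[/eqP<- // | Kk].
by apply: lt_trans hK _; rewrite (increasing_mono hc).
Qed.

Lemma diverging_gaps_from N f :
  increasing (fun i => gap f (N + i)) -> (forall u, exists i, lt u (gap f (N + i))) ->
  diverging_gaps f.
Proof.
move=> hinc unb d; have [K hK] := eventually_lt_increasing hinc unb d.
exists (N + K)%N => k Kk; have -> : k = (N + (k - N))%N by lia.
by apply: hK; lia.
Qed.

Section DivergingGaps.
Variable g : nat -> G.
Hypotheses (g_incr : increasing g) (g_gaps : diverging_gaps g).

Lemma unbounded_of_diverging_gaps u : exists k, lt u (g k).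
Proof.
have [K hK] := g_gaps (u - g 0%N); exists K.+2.
have := lt_add2r (g 0%N) (hK K.+1 (leqnSn K)); rewrite subrK => lt_u.
apply: lt_trans lt_u _; rewrite /gap -[X in lt _ X](subrK (g K.+1)).
by apply: lt_add2l; rewrite (increasing_mono g_incr).
Qed.

(* Far out, x + b j and y + b j would be terms of g closer together than
   consecutive ones. *)
Lemma bounded_of_translates_in_range x y (b : nat -> G) (Q : pred nat) :
  increasing b -> lt x y ->
  (forall j, Q j -> exists k, x + b j = g k) ->
  (forall j, Q j -> exists k, y + b j = g k) ->
  exists K, forall j, Q j -> (j < K)%N.
Proof.
move=> b_incr xy Qx Qy; apply: NNPP => Q_unbounded.
have Q_infinite K : exists j, (K <= j)%N /\ Q j.
  apply: NNPP => none; apply: Q_unbounded; exists K => j Qj.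
  by rewrite ltnNge; apply/negP => Kj; apply: none; exists j.
have far n : exists j k, [/\ Q j, x + b j = g k & (n <= k)%N].
  elim: n => [|n [j [k [Qj ejk nk]]]].
    have [j [_ Qj]] := Q_infinite 0%N; have [k ejk] := Qx j Qj; by exists j, k.
  have [j' [jj' Qj']] := Q_infinite j.+1; have [k' ejk'] := Qx j' Qj'.
  exists j', k'; split => //; apply: leq_ltn_trans nk _.
  rewrite -(increasing_mono g_incr) -ejk -ejk'.
  by apply: lt_add2l; rewrite (increasing_mono b_incr).
have [K hK] := g_gaps (y - x).
have [j [k [Qj ejk Kk]]] := far K; have [k' ejk'] := Qy j Qj.
have kk' : (k < k')%N.
  by rewrite -(increasing_mono g_incr) -ejk -ejk'; apply: lt_add2r.
have := lt_add2r (g k) (hK k Kk).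
rewrite /gap subrK -ejk addrA subrK ejk' (increasing_mono g_incr).
by rewrite ltnS leqNgt kk'.
Qed.

Theorem range_not_sumset (a b : nat -> G) (P Q : pred nat) i1 i2 j1 j2 :
  increasing a -> increasing b ->
  (forall i j, P i -> Q j -> exists k, a i + b j = g k) ->
  (forall k, exists i j, [/\ P i, Q j & a i + b j = g k]) ->
  P i1 -> P i2 -> (i1 < i2)%N -> Q j1 -> Q j2 -> (j1 < j2)%N -> False.
Proof.
move=> a_incr b_incr in_range onto Pi1 Pi2 i12 Qj1 Qj2 j12.
have [Kq Q_bounded] := bounded_of_translates_in_range b_incr
  (etrans (increasing_mono a_incr _ _) i12)
  (fun j => in_range i1 j Pi1) (fun j => in_range i2 j Pi2).
have in_range' j i : Q j -> P i -> exists k, b j + a i = g k.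
  by rewrite addrC => Qj Pi; apply: in_range.
have [Kp P_bounded] := bounded_of_translates_in_range a_incr
  (etrans (increasing_mono b_incr _ _) j12)
  (fun i => in_range' j1 i Qj1) (fun i => in_range' j2 i Qj2).
have [k above] := unbounded_of_diverging_gaps (a Kp + b Kq).
have [i [j [Pi Qj ijk]]] := onto k.
have : lt (g k) (a Kp + b Kq).
  rewrite -ijk; apply: (@lt_trans (a Kp + b j)).
  - by apply: lt_add2r; rewrite (increasing_mono a_incr) P_bounded.
  - by apply: lt_add2l; rewrite (increasing_mono b_incr) Q_bounded.
by move/lt_asym; rewrite above.
Qed.

End DivergingGaps.
End OrderedGroup.

Section SeriesProduct.
Variables (R : idomainType) (S : pred R) (G : zmodType).

Lemma is_monomial_of_support1 (p : nat -> R) (a : nat -> G) i0 :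
  p i0 \in S -> (forall i, p i != 0 -> i = i0) -> is_monomial S p a.
Proof.
move=> pS supp; exists (p i0), (a i0); split => // h.
case: (eqVneq h (a i0)) => [-> | h_ne]; first by left; exists i0.
case: (classic (exists i, a i = h)) => [[i ai] | none].
  left; exists i; split => //; apply: contraTeq h_ne => /supp i_i0.
  by rewrite -ai i_i0 eqxx.
by right; split => // i ai; apply: none; exists i.
Qed.

Lemma support2_of_not_monomial (p : nat -> R) (a : nat -> G) :
  (forall i, p i \in S) -> ~ is_monomial S p a ->
  exists i1 i2, [/\ (i1 < i2)%N, p i1 != 0 & p i2 != 0].
Proof.
move=> pS not_mono; apply: NNPP => no_pair; apply: not_mono.
case: (classic (exists i0, p i0 != 0)) => [[i0 pi0] | zero].
  apply: (@is_monomial_of_support1 _ _ i0) => // i pi.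
  by case: (ltngtP i i0) => // ii0; case: no_pair; [exists i, i0 | exists i0, i].
by apply: (@is_monomial_of_support1 _ _ 0%N) => // i pi; case: zero; exists i.
Qed.

Hypotheses (S_semiring : semidomain_pred S) (S_reduced : additively_reduced S).

Lemma sum_in_S (I : Type) (r : seq I) (F : I -> R) :
  (forall i, F i \in S) -> \sum_(i <- r) F i \in S.
Proof. by case: S_semiring => S0 _ SD _ FS; apply: (big_ind (fun x => x \in S)). Qed.

Lemma sum_S_eq0 (I : eqType) (r : seq I) (F : I -> R) :
  (forall i, F i \in S) -> \sum_(i <- r) F i = 0 -> forall i, i \in r -> F i = 0.
Proof.
move=> FS; elim: r => [|j r IHr] //; rewrite big_cons => sum0 i.
have Fj0 := S_reduced (FS j) (sum_in_S r FS) sum0.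
rewrite in_cons => /orP[/eqP-> // | ir]; apply: IHr ir.
by move: sum0; rewrite Fj0 add0r.
Qed.

Variables (s p q : nat -> R) (g a b : nat -> G).
Hypothesis f_eq_pq : series_mul_eq s g p a q b.

Lemma mul_support_sub i j :
  (forall i, p i \in S) -> (forall j, q j \in S) -> p i != 0 -> q j != 0 ->
  exists k, a i + b j = g k.
Proof.
move=> pS qS pi qj; have [c [c_coef [l [_ l_pairs c_sum]]]] := f_eq_pq (a i + b j).
case: c_coef => [[k [gk _]] | [_ c0]]; first by exists k.
suff : p i * q j = 0 by move/eqP; rewrite mulf_eq0 (negbTE pi) (negbTE qj).
apply: (@sum_S_eq0 _ l (fun ij => p ij.1 * q ij.2) _ _ (i, j)).
- by move=> ij; case: S_semiring => _ _ _; apply.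
- by rewrite -c_sum c0.
- exact/l_pairs.
Qed.

Lemma mul_support_sup k : injective g -> s k != 0 ->
  exists i j, [/\ p i != 0, q j != 0 & a i + b j = g k].
Proof.
move=> g_inj sk; have [c [c_coef [l [_ l_pairs c_sum]]]] := f_eq_pq (g k).
have c_nz : c != 0.
  by case: c_coef => [[k' [/g_inj -> <-]] // | [no_k _]]; case: (no_k k).
have : has (fun ij => p ij.1 * q ij.2 != 0) l.
  apply: contraNT c_nz => /hasPn l0; rewrite c_sum big1_seq // => ij /andP[_ /l0].
  by move/negPn/eqP.
case/hasP => [[i j] /l_pairs ijk]; rewrite /= mulf_eq0 negb_or => /andP[pi qj].
by exists i, j.
Qed.

End SeriesProduct.

(* Torsion-freeness only guarantees that G admits a compatible order; here the
   order is given. *)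
Theorem lemma4p3 (R : idomainType) (S : pred R) (G : zmodType) (lt : rel G)
    (s : nat -> R) (g : nat -> G) :
  semidomain_pred S -> additively_reduced S ->
  torsion_free G -> ordered_group lt ->
  is_series S lt s g ->
  (forall i, s i != 0) ->
  (exists N : nat,
     (forall i, lt (g (N + i)%N.+1 - g (N + i)%N) (g (N + i.+1)%N.+1 - g (N + i.+1)%N)) /\
     (forall u : G, exists i, lt u (g (N + i)%N.+1 - g (N + i)%N))) ->
  monolithic S lt s g.
Proof.
move=> S_semiring S_reduced _ og [_ g_incr] s_nz [N [gaps_incr gaps_unbounded]].
have g_gaps := diverging_gaps_from (f := g) og gaps_incr gaps_unbounded.
split; first by exists 0%N.
move=> p a q b [pS a_incr] [qS b_incr] f_eq_pq; apply: NNPP => no_monomial.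
have [i1 [i2 [i12 pi1 pi2]]] :=
  support2_of_not_monomial pS (fun mp => no_monomial (or_introl mp)).
have [j1 [j2 [j12 qj1 qj2]]] :=
  support2_of_not_monomial qS (fun mq => no_monomial (or_intror mq)).
apply: (@range_not_sumset _ _ og g g_incr g_gaps a b
  (fun i => p i != 0) (fun j => q j != 0) i1 i2 j1 j2) => // [i j|k].
- exact: (mul_support_sub S_semiring S_reduced f_eq_pq pS qS).
- exact: (mul_support_sup f_eq_pq (increasing_inj og g_incr) (s_nz k)).
Qed.
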